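(* Let $X$ be an infinite set, $k>0$ an integer, and $\{(x^0_n,\dots,x^{k-1}_n):n\in\omega\}$ a sequence in $([X]^{<\omega})^k$. Then there exist: elements $d_0,\dots,d_{k-1}\in[X]^{<\omega}$; a strictly increasing sequence $(n_l)_{l\in\omega}$ in $\omega$; an integer $t$ with $0\le t\le k$ and a sequence $\{(y^0_{n_l},\dots,y^{t-1}_{n_l}):l\in\omega\}$ in $([X]^{<\omega})^t$; and for each $0\le s<k$ a function $P_s:t\to 2$, such that (i) $x^s_{n_l}=\Big(\sum_{i=0}^{t-1}P_s(i)\,y^i_{n_l}\Big)\triangle d_s$ for every $l\in\omega$ and $0\le s<k$ (where for $t=0$ this reads $x^s_{n_l}=d_s$); (ii) the family $\{y^i_{n_l}: l\in\omega,\ 0\le i<t\}$ is linearly independent.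
   Context: $[X]^{<\omega}$ is the set of finite subsets of $X$, regarded as a vector space over the field $2=\{0,1\}$ with symmetric difference $\triangle$ as addition; sums $\sum P(i)y^i$ are taken in this vector space. Linear independence is over $2$, for the indexed family (so members are pairwise distinct). *)

From mathcomp Require Import all_boot all_order.
From mathcomp Require Import finmap.
Set Implicit Arguments. Unset Strict Implicit. Unset Printing Implicit Defensive.

Local Open Scope fset_scope.

(* symmetric difference: the addition of the GF(2)-vector space [X]^{<omega} *)
Definition symdiff (X : choiceType) (A B : {fset X}) : {fset X} :=
  fsetU (fsetD A B) (fsetD B A).

Definition lincomb (X : choiceType) (t : nat) (P : 'I_t -> bool)
  (y : 'I_t -> {fset X}) : {fset X} :=
  \big[@symdiff X/fset0]_(i < t) (if P i then y i else fset0).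

(* linear independence over 2 of an indexed family y : I -> [X]^{<omega}:
   no nonempty finite set of indices has (symmetric-difference) sum 0.
   (This also forces the members to be pairwise distinct.) *)
Definition lin_indep (X : choiceType) (I : eqType) (y : I -> {fset X}) : Prop :=
  forall F : seq I, uniq F ->
    \big[@symdiff X/fset0]_(j <- F) y j = fset0 -> F = [::].

Definition infinite_type (X : choiceType) : Prop :=
  forall s : seq X, exists x : X, x \notin s.

From HB Require Import structures.
From mathcomp Require Import all_boot all_order.
From mathcomp Require Import finmap.
From Stdlib Require Import Classical ClassicalEpsilon.

Set Implicit Arguments.
Unset Strict Implicit.
Unset Printing Implicit Defensive.

(** Treat the coordinates one at a time, passing to subsequences, and keep a
  set B of "basis" coordinates every nonempty sum of which eventually leaves
  every finite set.  A new coordinate s either differs, infinitely often, by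
  one fixed d_s from some sum of basis coordinates (pass to that subsequence;
  x^s is then that sum plus d_s), or it does not, and then s can be added to
  B.  Finally, a greedy subsequence makes every nonempty sum of basis vectors
  at stage l avoid the (finite) span of the basis vectors at earlier stages;
  this is linear independence, since in a vanishing sum the terms of the
  latest stage would lie in that span. *)

Section Subsequences.
Variable T : eqType.

Definition infinitely_often (p : nat -> Prop) := forall m, exists2 n, m <= n & p n.

Definition escaping (f : nat -> T) :=
  forall S : seq T, exists b, forall m, b <= m -> f m \notin S.

Lemma escaping_of_finite_fibres (f : nat -> T) :
  (forall v, ~ infinitely_often (fun m => f m = v)) -> escaping f.
Proof.
move=> fin_fibre; elim=> [|v S [b Hb]]; first by exists 0.
have [b' Hb'] : exists b', forall m, b' <= m -> f m <> v.
  apply: NNPP => no_bound; apply: (fin_fibre v) => m.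
  apply: NNPP => no_hit; apply: no_bound; exists m => n le_mn fn_v.
  by apply: no_hit; exists n.
exists (maxn b b') => m; rewrite geq_max => /andP[le_bm le_b'm].
by rewrite in_cons negb_or Hb // andbT; apply/eqP/Hb'.
Qed.

Lemma ltn_homo_id_leq (psi : nat -> nat) :
  {homo psi : m n / m < n} -> forall n, n <= psi n.
Proof.
by move=> psi_incr; elim=> // n IHn; apply: leq_ltn_trans IHn (psi_incr _ _ _).
Qed.

Lemma escaping_subseq (f : nat -> T) (psi : nat -> nat) :
  {homo psi : m n / m < n} -> escaping f -> escaping (fun m => f (psi m)).
Proof.
move=> psi_incr f_esc S; have [b Hb] := f_esc S.
by exists b => m le_bm; apply/Hb/(leq_trans le_bm)/ltn_homo_id_leq.
Qed.

Lemma increasing_choice (R : seq nat -> nat -> Prop) :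
  (forall s m, exists2 n, m <= n & R s n) ->
  exists psi : nat -> nat,
    {homo psi : m n / m < n} /\ forall l, R (map psi (iota 0 l)) (psi l).
Proof.
move=> HR; have /choice[next next_spec] sm : exists n, sm.2 <= n /\ R sm.1 n.
  by have [n] := HR sm.1 sm.2; exists n.
pose fix prefix l :=
  if l is l'.+1 then rcons (prefix l') (next (prefix l', (last 0 (prefix l')).+1))
  else [::].
pose psi l := next (prefix l, (last 0 (prefix l)).+1).
have prefixE l : prefix l = map psi (iota 0 l).
  by elim: l => // l IHl; rewrite -addn1 [in RHS]iotaD map_cat -IHl cats1 addn1.
have psi_spec l : (last 0 (prefix l)).+1 <= psi l /\ R (prefix l) (psi l).
  exact: (next_spec (prefix l, _)).
exists psi; split=> [|l]; last by rewrite -prefixE; case: (psi_spec l).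
apply: homo_ltn ltn_trans _ => l.
by have [+ _] := psi_spec l.+1; rewrite /= last_rcons.
Qed.

End Subsequences.

Section SymmetricDifference.
Variable X : choiceType.
Local Notation V := {fset X}.
Local Notation sd := (@symdiff X).

Lemma symdiffA : associative sd.
Proof.
move=> a b c; apply/fsetP=> v; rewrite /symdiff !inE.
by case: (v \in a); case: (v \in b); case: (v \in c).
Qed.

Lemma symdiffC : commutative sd.
Proof.
by move=> a b; apply/fsetP=> v; rewrite /symdiff !inE; case: (v \in a); case: (v \in b).
Qed.

Lemma symdiff0x : left_id fset0 sd.
Proof. by move=> a; apply/fsetP=> v; rewrite /symdiff !inE; case: (v \in a). Qed.

HB.instance Definition _ := Monoid.isComLaw.Build V fset0 sd symdiffA symdiffC symdiff0x.

Lemma symdiffx0 : right_id fset0 sd.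
Proof. by move=> a; rewrite symdiffC symdiff0x. Qed.

Lemma symdiffxx a : sd a a = fset0.
Proof. by apply/fsetP=> v; rewrite /symdiff !inE; case: (v \in a). Qed.

Lemma symdiffK b : cancel (sd^~ b) (sd^~ b).
Proof. by move=> a; rewrite -symdiffA symdiffxx symdiffx0. Qed.

Lemma symdiff_eq0 a b : sd a b = fset0 -> a = b.
Proof. by move=> ab0; rewrite -(symdiffK b a) ab0 symdiff0x. Qed.

Fixpoint span (L : seq V) : seq V :=
  if L is v :: L' then span L' ++ map (sd v) (span L') else [:: fset0].

Lemma span0 L : fset0 \in span L.
Proof. by elim: L => [|v L IHL] /=; rewrite ?mem_seq1 // mem_cat IHL. Qed.

Lemma span_symdiff L a b : a \in span L -> b \in span L -> sd a b \in span L.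
Proof.
elim: L a b => [|v L IHL] a b /=.
  by rewrite !mem_seq1 => /eqP-> /eqP->; rewrite symdiffxx.
rewrite !mem_cat => /orP[aL|/mapP[a' a'L ->]] /orP[bL|/mapP[b' b'L ->]].
- by rewrite IHL.
- by rewrite symdiffA (symdiffC a) -symdiffA map_f ?orbT ?IHL.
- by rewrite -symdiffA map_f ?orbT ?IHL.
- by rewrite symdiffA (symdiffC _ v) symdiffA symdiffxx symdiff0x IHL.
Qed.

Lemma mem_span L v : v \in L -> v \in span L.
Proof.
elim: L => [|w L IHL] //=; rewrite in_cons mem_cat => /orP[/eqP->|vL].
  by apply/orP; right; rewrite -{1}[w]symdiffx0 map_f ?span0.
by rewrite IHL.
Qed.

Lemma big_span (I : eqType) (r : seq I) (P : pred I) (f : I -> V) L :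
  (forall i, i \in r -> P i -> f i \in span L) ->
  \big[sd/fset0]_(i <- r | P i) f i \in span L.
Proof.
move=> fL; rewrite big_seq_cond.
by elim/big_ind: _ => [|a b|i /andP[]]; [apply: span0 | apply: span_symdiff | apply: fL].
Qed.

Lemma big_level (I : finType) (F : seq (nat * I)) (f : nat -> I -> V) L :
  uniq F ->
  \big[sd/fset0]_(p <- F | p.1 == L) f p.1 p.2 =
  \big[sd/fset0]_(i in [set i | (L, i) \in F]) f L i.
Proof.
move=> uniqF; rewrite -big_filter (eq_big_seq (fun p => f L p.2)); last first.
  by move=> p; rewrite mem_filter => /andP[/eqP->].
rewrite -(big_map snd xpredT (f L)) big_uniq /=; last first.
  rewrite map_inj_in_uniq ?filter_uniq // => -[a i] [b j].
  by rewrite !mem_filter => /andP[/eqP/= -> _] /andP[/eqP/= -> _] /= ->.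
apply: eq_bigl => i; rewrite inE; apply/mapP/idP => [[[a j]]|iF].
  by rewrite mem_filter => /andP[/eqP/= -> ?] ->.
by exists (L, i); rewrite // mem_filter eqxx.
Qed.

Lemma bigmax_seq_attained (I : eqType) (r : seq I) (f : I -> nat) :
  r != [::] -> exists2 i, i \in r & f i = \max_(j <- r) f j.
Proof.
elim: r => // a r IHr _; rewrite big_cons.
have [->|/IHr [b br <-]] := eqVneq r [::].
  by exists a; rewrite ?mem_head // big_nil maxn0.
case: (leqP (f a) (f b)) => _; first by exists b; rewrite // in_cons br orbT.
by exists a; rewrite ?mem_head.
Qed.

Lemma lin_indep_levels t (y : nat -> 'I_t -> V) :
  (forall L (Q : {set 'I_t}), Q != set0 ->
     \big[sd/fset0]_(i in Q) y L i
       \notin span (flatten [seq codom (y l) | l <- iota 0 L])) ->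
  lin_indep (fun p : nat * 'I_t => y p.1 p.2).
Proof.
move=> fresh F uniqF sum0; apply/eqP; apply: contraT => F_nonempty.
pose L := \max_(p <- F) p.1.
have [[L' i0] i0F /= L'L] := bigmax_seq_attained (fun p : nat * 'I_t => p.1) F_nonempty.
pose Q := [set i | (L, i) \in F].
have Q_nonempty : Q != set0 by apply/set0Pn; exists i0; rewrite inE /L -L'L.
have earlier : \big[sd/fset0]_(p <- F | p.1 != L) y p.1 p.2
                 \in span (flatten [seq codom (y l) | l <- iota 0 L]).
  apply: big_span => -[l i] pF /= lL; apply/mem_span/flatten_mapP; exists l.
    by rewrite mem_iota /= ltn_neqAle lL (leq_bigmax_seq (l, i)).
  exact: codom_f.
rewrite (bigID (fun p => p.1 == L)) /= big_level // in sum0.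
by move: (fresh L Q Q_nonempty); rewrite (symdiff_eq0 sum0) earlier.
Qed.

Lemma lincomb_enum_val (T : finType) (B A : {set T}) (f : T -> V) :
  A \subset B ->
  lincomb (fun i : 'I_#|B| => enum_val i \in A) (fun i => f (enum_val i)) =
  \big[sd/fset0]_(j in A) f j.
Proof.
move=> AB; rewrite /lincomb -big_mkcond /= -big_enum_val_cond.
by apply: eq_bigl => j; apply/andP/idP => [[]//|jA]; rewrite (subsetP AB).
Qed.

End SymmetricDifference.

Section Reduction.

Variables (X : choiceType) (k : nat).
Local Notation V := {fset X}.
Local Notation sd := (@symdiff X).

Record reduction (z : nat -> 'I_k -> V) (s : nat) (B : {set 'I_k})
    (P : 'I_k -> {set 'I_k}) (d : 'I_k -> V) : Prop := Reduction {
  reduction_sub : forall j : 'I_k, j < s -> P j \subset B;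
  reduction_coordE : forall m (j : 'I_k), j < s ->
    z m j = sd (\big[sd/fset0]_(i in P j) z m i) (d j);
  reduction_escaping : forall Q : {set 'I_k}, Q \subset B -> Q != set0 ->
    escaping (fun m => \big[sd/fset0]_(i in Q) z m i) }.

Lemma reduction0 z : reduction z 0 set0 (fun _ => set0) (fun _ => fset0).
Proof. by split=> // Q; rewrite subset0 => ->. Qed.

Lemma reduction_subseq z s B P d (psi : nat -> nat) :
  {homo psi : m n / m < n} -> reduction z s B P d ->
  reduction (fun m => z (psi m)) s B P d.
Proof.
move=> psi_incr [sub coordE esc]; split=> // [m j|Q QB Q0]; first exact: coordE.
exact: escaping_subseq (esc Q QB Q0).
Qed.

Lemma reduction_extend z s B P d (B' Q : {set 'I_k}) (j0 : 'I_k) v :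
  reduction z s B P d -> j0 = s :> nat -> B \subset B' ->
  (forall Q' : {set 'I_k}, Q' \subset B' -> Q' != set0 ->
     escaping (fun m => \big[sd/fset0]_(i in Q') z m i)) ->
  Q \subset B' -> (forall m, z m j0 = sd (\big[sd/fset0]_(i in Q) z m i) v) ->
  reduction z s.+1 B' (fun j => if j == j0 then Q else P j)
                      (fun j => if j == j0 then v else d j).
Proof.
move=> [sub coordE _] j0s BB' esc QB' zj0.
have lt_s (j : 'I_k) : j < s.+1 -> j != j0 -> j < s.
  by rewrite ltnS leq_eqVlt -j0s => /orP[/eqP/ord_inj->|//]; rewrite eqxx.
split=> // [j|m j] js; case: (eqVneq j j0) => [j_j0|ne_j]; rewrite ?j_j0 //.
- exact: subset_trans (sub _ (lt_s _ js ne_j)) BB'.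
- exact: coordE (lt_s _ js ne_j).
Qed.

Lemma reduction_step_dependent z s B P d (j0 : 'I_k) (Q : {set 'I_k}) v :
  reduction z s B P d -> j0 = s :> nat -> Q \subset B ->
  infinitely_often (fun m => sd (z m j0) (\big[sd/fset0]_(i in Q) z m i) = v) ->
  exists2 psi : nat -> nat, {homo psi : m n / m < n} &
    reduction (fun m => z (psi m)) s.+1 B (fun j => if j == j0 then Q else P j)
                                          (fun j => if j == j0 then v else d j).
Proof.
move=> red j0s QB often.
have [psi [psi_incr psi_v]] := increasing_choice (fun _ m => often m).
have red_psi := reduction_subseq psi_incr red.
exists psi => //.
apply: (reduction_extend red_psi j0s (subxx B) (reduction_escaping red_psi) QB) => m.
by rewrite -(psi_v m) symdiffC symdiffK.
Qed.

Lemma reduction_step_free z s B P d (j0 : 'I_k) :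
  reduction z s B P d -> j0 = s :> nat ->
  (forall (Q : {set 'I_k}) v, Q \subset B ->
     ~ infinitely_often (fun m => sd (z m j0) (\big[sd/fset0]_(i in Q) z m i) = v)) ->
  reduction z s.+1 (j0 |: B) (fun j => if j == j0 then [set j0] else P j)
                             (fun j => if j == j0 then fset0 else d j).
Proof.
move=> red j0s rare; apply: (reduction_extend red j0s (subsetU1 _ _)); last first.
- by move=> m; rewrite big_set1 symdiffx0.
- by rewrite sub1set setU11.
move=> Q QB' Q0; have QB i : i \in Q -> i != j0 -> i \in B.
  by move=> /(subsetP QB'); rewrite in_setU1 => /orP[/eqP->|//]; rewrite eqxx.
have [j0Q|j0Q] := boolP (j0 \in Q); last first.
  apply: (reduction_escaping red) Q0; apply/subsetP => i iQ.
  by apply: (QB i iQ); apply: contraNneq _ j0Q => <-.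
have sumE m : \big[sd/fset0]_(i in Q) z m i =
              sd (z m j0) (\big[sd/fset0]_(i in Q :\ j0) z m i).
  by rewrite (bigD1 j0) //=; congr (_ _ _); apply: eq_bigl => i; rewrite in_setD1 andbC.
apply: escaping_of_finite_fibres => u often; apply: (rare (Q :\ j0) u).
  by apply/subsetP => i /setD1P[ne_i iQ]; apply: QB.
by move=> m; have [n le_mn <-] := often m; exists n; rewrite // sumE.
Qed.

Lemma reduction_step z s B P d : reduction z s B P d -> s < k ->
  exists (psi : nat -> nat) B' P' d',
    {homo psi : m n / m < n} /\ reduction (fun m => z (psi m)) s.+1 B' P' d'.
Proof.
move=> red lt_sk; pose j0 := Ordinal lt_sk.
have [[Q [v [QB often]]]|never] := classic (exists (Q : {set 'I_k}) v, Q \subset B /\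
  infinitely_often (fun m => sd (z m j0) (\big[sd/fset0]_(i in Q) z m i) = v)).
  have [psi psi_incr red'] := reduction_step_dependent (j0 := j0) red erefl QB often.
  by exists psi; do 3!eexists; exact: (conj psi_incr red').
exists id; do 3!eexists; split=> //; apply: (reduction_step_free (j0 := j0) red erefl).
by move=> Q v QB often; apply: never; exists Q, v.
Qed.

Lemma exists_reduction (x : nat -> 'I_k -> V) s : s <= k ->
  exists (phi : nat -> nat) B P d,
    {homo phi : m n / m < n} /\ reduction (fun m => x (phi m)) s B P d.
Proof.
elim: s => [_|s IHs lt_sk].
  by exists id; do 3!eexists; split=> //; apply: reduction0.
have [phi [B [P [d [phi_incr red]]]]] := IHs (ltnW lt_sk).
have [psi [B' [P' [d' [psi_incr red']]]]] := reduction_step red lt_sk.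
by exists (fun m => phi (psi m)), B', P', d'; split=> // m n /psi_incr/phi_incr.
Qed.

Lemma reduction_escaping_enum z s B P d : reduction z s B P d ->
  forall Q : {set 'I_#|B|}, Q != set0 ->
    escaping (fun m => \big[sd/fset0]_(i in Q) z m (enum_val i)).
Proof.
move=> red Q Q0; have QB : enum_val @: Q \subset B.
  by apply/subsetP => _ /imsetP[i _ ->]; apply: enum_valP.
have := reduction_escaping red QB; rewrite imset_eq0 => /(_ Q0) esc S.
have [b Hb] := esc S; exists b => m /Hb; rewrite big_imset //.
by move=> i j _ _; apply: enum_val_inj.
Qed.

End Reduction.

Lemma independent_subsequence (X : choiceType) t (z : nat -> 'I_t -> {fset X}) :
  (forall Q : {set 'I_t}, Q != set0 ->
     escaping (fun m => \big[@symdiff X/fset0]_(i in Q) z m i)) ->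
  exists2 psi : nat -> nat, {homo psi : m n / m < n} &
    lin_indep (fun p : nat * 'I_t => z (psi p.1) p.2).
Proof.
move=> esc.
pose fresh s m := forall Q : {set 'I_t}, Q != set0 ->
  \big[@symdiff X/fset0]_(i in Q) z m i \notin span (flatten [seq codom (z n) | n <- s]).
have [|psi [psi_incr psi_fresh]] := @increasing_choice fresh.
  move=> s m; pose S := span (flatten [seq codom (z n) | n <- s]).
  have /fin_all_exists[b Hb] (Q : {set 'I_t}) : exists b, Q != set0 ->
      forall n, b <= n -> \big[@symdiff X/fset0]_(i in Q) z n i \notin S.
    have [->|Q0] := eqVneq Q set0; first by exists 0.
    by have [b Hb] := esc Q Q0 S; exists b.
  exists (maxn m (\max_Q b Q)); first exact: leq_maxl.
  by move=> Q Q0; apply: Hb; rewrite // leq_max leq_bigmax orbT.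
exists psi => //; apply: (lin_indep_levels (y := fun l => z (psi l))) => L Q Q0.
by have := psi_fresh L Q Q0; rewrite -map_comp.
Qed.

Unset Implicit Arguments.

Theorem mainTheorem3 (X : choiceType) (k : nat)
  (x : nat -> 'I_k -> {fset X}) :
  infinite_type X -> 0 < k ->
  exists (d : 'I_k -> {fset X}) (n : nat -> nat) (t : nat)
         (y : nat -> 'I_t -> {fset X}) (P : 'I_k -> 'I_t -> bool),
    (forall l, n l < n l.+1) /\ t <= k /\
    (forall l (s : 'I_k), x (n l) s = symdiff (lincomb (P s) (y l)) (d s)) /\
    lin_indep (fun p : nat * 'I_t => y p.1 p.2).
Proof.
move=> _ _.
have [phi [B [P [d [phi_incr red]]]]] := exists_reduction x (leqnn k).
have [psi psi_incr indep] := independent_subsequence (reduction_escaping_enum red).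
exists d, (fun l => phi (psi l)), #|B|, (fun l i => x (phi (psi l)) (enum_val i)),
  (fun s i => enum_val i \in P s).
split; first by move=> l; apply/phi_incr/psi_incr.
split; first by rewrite -[k in _ <= k]card_ord max_card.
split=> // l s; rewrite lincomb_enum_val ?(reduction_sub red) //.
exact: (reduction_coordE red).
Qed.
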